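(* In an $a^2bc$-tiling with $f$ tiles, there is a vertex containing at least two $\beta$ if and only if there is a vertex containing at least two $\gamma$, if and only if there is a vertex containing at least two $\delta$. Moreover, if none of these exist, then the only vertices of the tiling are $\alpha^{f/2}$ and $\beta\gamma\delta$.
   Context: An $a^2bc$-quadrilateral is a simple spherical quadrilateral with edges $a,a,b,c$ in cyclic order, $a,b,c$ pairwise distinct; $\alpha$ = angle between the two $a$-edges; $\beta$ = angle between an $a$-edge and the $b$-edge; $\delta$ = angle between the $b$-edge and the $c$-edge; $\gamma$ = angle between the $c$-edge and an $a$-edge. An $a^2bc$-tiling is an edge-to-edge tiling of the sphere by $f$ congruent copies of such a quadrilateral with all vertices of degree $\ge3$. A vertex $\alpha^k\beta^l\gamma^m\delta^n$ has exactly $k$ copies of $\alpha$, etc. *)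

From HB Require Import structures.
From mathcomp Require Import all_boot all_order all_algebra.
From mathcomp Require Import reals trigo.

Set Implicit Arguments.
Unset Strict Implicit.
Unset Printing Implicit Defensive.

Import Order.TTheory GRing.Theory Num.Theory.
Local Open Scope ring_scope.

(* Each tile has four corners k : 'I_4, in cyclic
   order around the tile:
     corner 0 = alpha (between the two a-edges),
     corner 1 = beta  (between an a-edge and the b-edge),
     corner 2 = delta (between the b-edge and the c-edge),
     corner 3 = gamma (between the c-edge and the other a-edge).
   Edge k of a tile joins corner k and corner (k+1 mod 4):
     edge 0 = a, edge 1 = b, edge 2 = c, edge 3 = a. *)

Definition alpha_i : 'I_4 := @Ordinal 4 0 isT.
Definition beta_i  : 'I_4 := @Ordinal 4 1 isT.
Definition delta_i : 'I_4 := @Ordinal 4 2 isT.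
Definition gamma_i : 'I_4 := @Ordinal 4 3 isT.

Definition edge_len (R : Type) (a b c : R) (k : 'I_4) : R :=
  match val k with 1 => b | 2 => c | _ => a end.

Definition corner_angle (R : Type) (al be ga de : R) (k : 'I_4) : R :=
  match val k with 0 => al | 1 => be | 2 => de | _ => ga end.

(* A tile-edge is named by (t, k) : 'I_f * 'I_4 (edge k of
   tile t); [glue] pairs each tile-edge with the tile-edge of the (unique)
   neighbouring tile sharing it. *)
Record a2bc_tiling (R : realType) (f : nat) (V : finType) := A2bcTiling {
  len_a : R; len_b : R; len_c : R;
  ang_al : R; ang_be : R; ang_ga : R; ang_de : R;
  vert : 'I_f -> 'I_4 -> V;
  glue : 'I_f * 'I_4 -> 'I_f * 'I_4;
  len_pos : 0 < len_a /\ 0 < len_b /\ 0 < len_c;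
  len_distinct : [/\ len_a != len_b, len_b != len_c & len_a != len_c];
  ang_range : forall k : 'I_4,
      0 < corner_angle ang_al ang_be ang_ga ang_de k < 2 * pi;
  vert_inj : forall t, injective (vert t);
  vert_surj : forall v : V, exists t k, vert t k = v;
  glue_invol : forall e, glue (glue e) = e;
  glue_other : forall e, (glue e).1 != e.1;
  glue_len : forall e,
      edge_len len_a len_b len_c (glue e).2 = edge_len len_a len_b len_c e.2;
  glue_ends : forall e,
      [set vert (glue e).1 (glue e).2; vert (glue e).1 (ordS (glue e).2)]
      = [set vert e.1 e.2; vert e.1 (ordS e.2)];
  deg_ge3 : forall v : V, (3 <= #|[set x : 'I_f * 'I_4 | vert x.1 x.2 == v]|)%N;
  vertex_sum : forall v : V,
      \sum_(x : 'I_f * 'I_4 | vert x.1 x.2 == v)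
         corner_angle ang_al ang_be ang_ga ang_de x.2 = 2 * pi;
  (* the tiling is a cell decomposition of the sphere:
     V - E + F = 2 with E = 2f edges and F = f faces *)
  euler : (#|V| + f = 2 * f + 2)%N
}.

Definition nangle (R : realType) (f : nat) (V : finType)
    (T : a2bc_tiling R f V) (v : V) (k : 'I_4) : nat :=
  #|[set x : 'I_f * 'I_4 | (vert T x.1 x.2 == v) && (x.2 == k)]|.

From HB Require Import structures.
From mathcomp Require Import all_boot all_order all_algebra.
From mathcomp Require Import reals trigo zify ring lra.

Set Implicit Arguments.
Unset Strict Implicit.
Unset Printing Implicit Defensive.

Import Order.TTheory GRing.Theory Num.Theory.

(* The b-edges and the c-edges are each glued only among themselves, so at every
   vertex the tile-edges of type b (resp. c) pair up: beta + delta and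
   delta + gamma are even vertex by vertex.  Each of beta, gamma, delta occurs
   f times in total; if one of them never occurs twice at a vertex, parity
   forces another to coincide with it vertexwise, so it does not occur twice
   either.  When none occurs twice, every vertex is alpha^n or alpha^n beta
   gamma delta; comparing the angle sum at a beta-gamma-delta vertex with the
   total angle sum (f + 2) 2 pi = f (alpha + beta + gamma + delta) coming from
   Euler's formula gives n = 0 there and f alpha = 4 pi, hence n = f/2 at the
   alpha-vertices. *)

Lemma card_fixfree_involution_even (X : finType) (g : X -> X) (A : {set X}) :
  {in A, forall x, g x \in A} -> involutive g -> (forall x, g x != x) ->
  ~~ odd #|A|.
Proof.
move=> gA gK gN; elim: {A}_.+1 {-2}A (ltnSn #|A|) gA => // n IHn A ltAn gA.
have [->|[x xA]] := set_0Vmem A; first by rewrite cards0.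
have pairA : [set x; g x] \subset A.
  by apply/subsetP => y /set2P[] ->; rewrite ?gA.
have cardA : #|A| = (#|A :\: [set x; g x]| + 2)%N.
  have := subset_leq_card pairA.
  by rewrite cardsD (setIidPr pairA) cards2 eq_sym gN => /subnK.
have gB : {in A :\: [set x; g x], forall y, g y \in A :\: [set x; g x]}.
  move=> y /setDP[yA]; rewrite !inE negb_or => /andP[yx ygx].
  rewrite gA // andbT negb_or; apply/andP; split.
    by apply: contra ygx => /eqP <-; rewrite gK.
  by apply: contra yx => /eqP/(congr1 g); rewrite !gK => ->.
rewrite cardA addn2 /= negbK.
by rewrite -[odd _]negbK IHn //; move: ltAn; rewrite cardA addn2; lia.
Qed.

Lemma eq_of_le1_even_sum (I : finType) (X Y : I -> nat) :
  (forall i, ~~ odd (X i + Y i)) -> \sum_i X i = \sum_i Y i ->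
  (forall i, X i <= 1) -> Y =1 X.
Proof.
move=> XY_even sumXY X_le1.
have leXY i : X i <= Y i.
  by move: (X_le1 i) (XY_even i); case: (X i) => [|[|]] //=; case: (Y i).
move=> i; apply/eqP; rewrite eqn_leq leXY andbT leqNgt; apply/negP => ltXY.
move: sumXY; rewrite (bigD1 i) //= [in RHS](bigD1 i) //=.
have : \sum_(j | j != i) X j <= \sum_(j | j != i) Y j by apply: leq_sum.
lia.
Qed.

Lemma exists_ge2_even_sum (I : finType) (X Y : I -> nat) :
  (forall i, ~~ odd (X i + Y i)) -> \sum_i X i = \sum_i Y i ->
  (exists i, 2 <= X i) -> exists i, 2 <= Y i.
Proof.
move=> XY_even sumXY [i leXi].
have [/existsP // | /existsPn Y_lt2] := boolP [exists j, 2 <= Y j].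
have Y_le1 j : Y j <= 1 by rewrite leqNgt Y_lt2.
have XY : X =1 Y.
  by apply: eq_of_le1_even_sum => // j; rewrite addnC.
by move: (Y_le1 i); rewrite -XY; lia.
Qed.

Lemma sum_corners (M : nmodType) (F : 'I_4 -> M) :
  (\sum_(j < 4) F j = F alpha_i + F beta_i + F delta_i + F gamma_i)%R.
Proof.
rewrite !big_ord_recl big_ord0 GRing.addr0 !GRing.addrA.
by congr (_ + _ + _ + _)%R; congr F; apply: val_inj.
Qed.

Section Tiling.
Variables (R : realType) (f : nat) (V : finType) (T : a2bc_tiling R f V).

Lemma card_tile_corners (P : 'I_f -> 'I_4 -> bool) :
  #|[set x : 'I_f * 'I_4 | P x.1 x.2]| = \sum_(t < f) \sum_(j < 4) P t j.
Proof.
rewrite -sum1dep_card pair_big /= big_mkcond /=.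
by apply: eq_bigr => -[t j] _ /=; case: (P t j).
Qed.

Lemma nangleE v k : nangle T v k = \sum_(t < f) (vert T t k == v).
Proof.
rewrite /nangle (card_tile_corners (fun t j => (vert T t j == v) && (j == k))).
apply: eq_bigr => t _; rewrite (bigD1 k) //= eqxx andbT big1 ?addn0 // => j.
by move/negbTE ->; rewrite andbF.
Qed.

Lemma sum_nangle k : \sum_v nangle T v k = f.
Proof.
under eq_bigr do rewrite nangleE.
rewrite exchange_big /= -[RHS]card_ord -sum1_card; apply: eq_bigr => t _.
by rewrite (bigD1 (vert T t k)) //= eqxx big1 // => v /negbTE; rewrite eq_sym => ->.
Qed.

Lemma glue_edge_bc e : e.2 \in [:: beta_i; delta_i] -> (glue T e).2 = e.2.
Proof.
have := glue_len T e; case: (len_distinct T) => ab bc ac.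
case: (glue T e) => t' j'; case: e => t j /=.
case: j => -[|[|[|[|m]]]] //= ltj4 len_j' _.
all: case: j' len_j' => -[|[|[|[|m']]]] //= ltj'4; rewrite /edge_len /= => len_eq.
all: first [ exact: val_inj | by rewrite len_eq eqxx in ab, bc, ac ].
Qed.

Lemma vert_ordS_neq t k : vert T t k != vert T t (ordS k).
Proof. by apply/eqP => /vert_inj /(congr1 val); case: k => -[|[|[|[|]]]]. Qed.

Lemma even_nangle_edge k : (forall e, e.2 = k -> (glue T e).2 = k) ->
  forall v, ~~ odd (nangle T v k + nangle T v (ordS k)).
Proof.
move=> glue_k v.
pose ends e := [set vert T e.1 e.2; vert T e.1 (ordS e.2)].
pose B := [set e : 'I_f * 'I_4 | (e.2 == k) && (v \in ends e)].
have -> : (nangle T v k + nangle T v (ordS k))%N = #|B|.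
  rewrite /B (card_tile_corners (fun t j => (j == k) && (v \in ends (t, j)))).
  rewrite !nangleE -big_split /=; apply: eq_bigr => t _.
  rewrite (bigD1 k) //= eqxx big1 ?addn0 => [|j /negbTE -> //].
  have ends_ne2 : ~~ ((vert T t k == v) && (vert T t (ordS k) == v)).
    by apply: contra (vert_ordS_neq t k) => /andP[/eqP -> /eqP ->].
  rewrite !inE !(eq_sym v) /=.
  by case: (vert T t k == v) ends_ne2; case: (vert T t (ordS k) == v).
apply: (@card_fixfree_involution_even _ (glue T)).
- move=> e; rewrite inE => /andP[/eqP ek ve].
  by rewrite inE glue_k // eqxx /ends glue_ends.
- by move=> e; rewrite glue_invol.
- by move=> e; apply: contraNneq (glue_other T e) => ->.
Qed.

Lemma even_nangle_beta_delta v : ~~ odd (nangle T v beta_i + nangle T v delta_i).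
Proof.
have -> : delta_i = ordS beta_i by apply: val_inj.
by apply: even_nangle_edge => -[t j] /= ->; rewrite glue_edge_bc.
Qed.

Lemma even_nangle_delta_gamma v : ~~ odd (nangle T v delta_i + nangle T v gamma_i).
Proof.
have -> : gamma_i = ordS delta_i by apply: val_inj.
by apply: even_nangle_edge => -[t j] /= ->; rewrite glue_edge_bc.
Qed.

Lemma even_nangle_beta_gamma v : ~~ odd (nangle T v beta_i + nangle T v gamma_i).
Proof.
move: (even_nangle_beta_delta v) (even_nangle_delta_gamma v); rewrite !oddD.
by case: (odd (nangle T v beta_i)); case: (odd (nangle T v delta_i)).
Qed.

Local Open Scope ring_scope.

Lemma vertex_angle_sum v :
  (nangle T v alpha_i)%:R * ang_al T + (nangle T v beta_i)%:R * ang_be T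
  + (nangle T v gamma_i)%:R * ang_ga T + (nangle T v delta_i)%:R * ang_de T
  = 2 * pi.
Proof.
rewrite -(vertex_sum T v); set ca := corner_angle _ _ _ _.
rewrite big_mkcond /= -(pair_bigA _ (fun t j => if vert T t j == v then ca j else 0)).
rewrite exchange_big sum_corners /=.
have nangle_corner j :
    \sum_(t < f) (if vert T t j == v then ca j else 0) = (nangle T v j)%:R * ca j.
  rewrite nangleE natr_sum mulr_suml; apply: eq_bigr => t _.
  by case: (vert T t j == v); rewrite ?mul1r ?mul0r.
by rewrite !nangle_corner /ca /corner_angle /=; ring.
Qed.

Lemma card_vertices : #|V| = (f + 2)%N.
Proof. by have := euler T; lia. Qed.

Lemma total_angle_sum :
  (f + 2)%:R * (2 * pi) = f%:R * (ang_al T + ang_be T + ang_ga T + ang_de T).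
Proof.
rewrite -card_vertices mulr_natl -sumr_const.
under eq_bigr => v _ do rewrite -(vertex_angle_sum v).
by rewrite !big_split /= -!mulr_suml -!natr_sum !sum_nangle; ring.
Qed.

Lemma ang_al_gt0 : 0 < ang_al T.
Proof. by have /andP[] := ang_range T alpha_i. Qed.

Section NoRepeatedBetaGammaDelta.
Hypotheses (beta_le1 : forall v, (nangle T v beta_i <= 1)%N)
  (gamma_eq_beta : forall v, nangle T v gamma_i = nangle T v beta_i)
  (delta_eq_beta : forall v, nangle T v delta_i = nangle T v beta_i).

Lemma vertex_angle_sum_bgd v :
  (nangle T v alpha_i)%:R * ang_al T
  + (nangle T v beta_i)%:R * (ang_be T + ang_ga T + ang_de T) = 2 * pi.
Proof. by rewrite -(vertex_angle_sum v) gamma_eq_beta delta_eq_beta; ring. Qed.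

Lemma exists_bgd_vertex : exists v, nangle T v beta_i = 1%N.
Proof.
have [w _] : exists w : V, w \in V by apply/card_gt0P; rewrite card_vertices addn2.
have [t [_ _]] := vert_surj T w.
exists (vert T t beta_i); apply/eqP; rewrite eqn_leq beta_le1 nangleE.
by rewrite (bigD1 t) //= eqxx.
Qed.

(* Subtracting f times the vertex equation from the total angle sum leaves
   f alpha (1 - n) = 4 pi > 0. *)
Lemma bgd_vertex_no_alpha v : nangle T v beta_i = 1%N -> nangle T v alpha_i = 0%N.
Proof.
move=> beta1; have := vertex_angle_sum_bgd v; rewrite beta1 mul1r => sum_v.
have := total_angle_sum; rewrite natrD => total.
set n := (nangle T v alpha_i)%:R in sum_v.
have f_al_ge0 : 0 <= f%:R * ang_al T by rewrite mulr_ge0 // ltW // ang_al_gt0.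
have excess : f%:R * ang_al T * (1 - n) = 4 * pi by nra.
suff : n < 1 by rewrite ltrn1; case: nangle.
by have := pi_gt0 R; nra.
Qed.

Lemma f_ang_al : f%:R * ang_al T = 4 * pi.
Proof.
have [v beta1] := exists_bgd_vertex.
have := vertex_angle_sum_bgd v; rewrite beta1 bgd_vertex_no_alpha //.
have := total_angle_sum; rewrite natrD; nra.
Qed.

Lemma alpha_vertex_count v : nangle T v beta_i = 0%N -> (nangle T v alpha_i).*2 = f.
Proof.
move=> beta0; have := vertex_angle_sum_bgd v; rewrite beta0 mul0r addr0 => sum_v.
apply/eqP; rewrite -(eqr_nat R) -muln2 natrM; apply/eqP.
apply: (mulIf (lt0r_neq0 ang_al_gt0)); rewrite f_ang_al; nra.
Qed.

End NoRepeatedBetaGammaDelta.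
End Tiling.

Theorem lemma8 (R : realType) (f : nat) (V : finType) (T : a2bc_tiling R f V) :
  ((exists v : V, 2 <= nangle T v beta_i) <->
   (exists v : V, 2 <= nangle T v gamma_i)) /\
  ((exists v : V, 2 <= nangle T v gamma_i) <->
   (exists v : V, 2 <= nangle T v delta_i)) /\
  ((~ exists v : V, 2 <= nangle T v beta_i) ->
   (~ exists v : V, 2 <= nangle T v gamma_i) ->
   (~ exists v : V, 2 <= nangle T v delta_i) ->
   forall v : V,
     [/\ (nangle T v alpha_i).*2 = f, nangle T v beta_i = 0,
         nangle T v gamma_i = 0 & nangle T v delta_i = 0]
     \/
     [/\ nangle T v alpha_i = 0, nangle T v beta_i = 1,
         nangle T v gamma_i = 1 & nangle T v delta_i = 1]).
Proof.
have sum_eq k k' : \sum_v nangle T v k = \sum_v nangle T v k'.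
  by rewrite !sum_nangle.
have even_bg := even_nangle_beta_gamma T; have even_dg := even_nangle_delta_gamma T.
have even_gb v : ~~ odd (nangle T v gamma_i + nangle T v beta_i).
  by rewrite addnC even_bg.
have even_gd v : ~~ odd (nangle T v gamma_i + nangle T v delta_i).
  by rewrite addnC even_dg.
split; [|split].
- by split; apply: exists_ge2_even_sum (sum_eq _ _).
- by split; apply: exists_ge2_even_sum (sum_eq _ _).
move=> no_beta _ _ v.
have beta_le1 w : nangle T w beta_i <= 1.
  by rewrite leqNgt; apply/negP => ?; apply: no_beta; exists w.
have gamma_eq_beta := eq_of_le1_even_sum even_bg (sum_eq _ _) beta_le1.
have delta_eq_beta :=
  eq_of_le1_even_sum (even_nangle_beta_delta T) (sum_eq _ _) beta_le1.
rewrite gamma_eq_beta delta_eq_beta.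
have [beta0|beta1] : nangle T v beta_i = 0 \/ nangle T v beta_i = 1.
  by have := beta_le1 v; lia.
- by left; rewrite beta0 (alpha_vertex_count beta_le1 gamma_eq_beta delta_eq_beta).
- by right; rewrite beta1 (bgd_vertex_no_alpha gamma_eq_beta delta_eq_beta).
Qed.
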